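(* Let $Q_1,\ldots,Q_n$ be positive definite real symmetric $n\times n$ matrices with $\sum_{i=1}^n\operatorname{tr}Q_i=n$. Let $H=\{x\in\mathbb R^n:\sum_i x_i=0\}$ and $f:H\to\mathbb R$, $f(x_1,\ldots,x_n)=\ln\det\left(\sum_{i=1}^n e^{x_i}Q_i\right)$, and let $(\xi_1,\ldots,\xi_n)\in H$ be a point at which $f$ attains its minimum on $H$. Let $S$ be an $n\times n$ matrix with $S^*S=\sum_{i=1}^n e^{\xi_i}Q_i$, let $T=S^{-1}$, $\tau_i=e^{\xi_i}$ and $B_i=\tau_iT^*Q_iT$ for $i=1,\ldots,n$. Then $$D(B_1,\ldots,B_n)\ \ge\ D(Q_1,\ldots,Q_n).$$
   Context: For real symmetric $n\times n$ matrices $Q_1,\ldots,Q_n$, the mixed discriminant is $D(Q_1,\ldots,Q_n)=\frac{\partial^n}{\partial t_1\cdots\partial t_n}\det(t_1Q_1+\cdots+t_nQ_n)$. $S^*$ denotes the transpose of $S$. (It is known that $f$ is strictly convex on $H$ and attains its minimum at a unique point, and then $(B_1,\ldots,B_n)$ is doubly stochastic.) *)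

From HB Require Import structures.
From Stdlib Require Import Reals Lra ClassicalEpsilon FunctionalExtensionality.
From mathcomp Require Import all_boot all_order all_algebra all_fingroup.

Set Implicit Arguments.
Unset Strict Implicit.
Unset Printing Implicit Defensive.

Import GRing.Theory.

Definition Req_bool (x y : R) : bool := if Req_EM_T x y then true else false.

Lemma Req_boolP : Equality.axiom Req_bool.
Proof. by move=> x y; rewrite /Req_bool; case: Req_EM_T => h; constructor. Qed.

HB.instance Definition _ := hasDecEq.Build R Req_boolP.

Definition R_find (P : pred R) (n : nat) : option R :=
  match excluded_middle_informative (exists x, P x) with
  | left h => Some (proj1_sig (constructive_indefinite_description _ h))
  | right _ => None
  end.

Lemma R_find_correct P n x : R_find P n = Some x -> P x.
Proof.
rewrite /R_find; case: excluded_middle_informative => // h [<-].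
exact: proj2_sig (constructive_indefinite_description _ h).
Qed.

Lemma R_find_complete (P : pred R) : (exists x, P x) -> exists n, R_find P n.
Proof. by move=> h; exists 0%N; rewrite /R_find; case: excluded_middle_informative. Qed.

Lemma R_find_ext (P Q : pred R) : P =1 Q -> R_find P =1 R_find Q.
Proof. by move=> /functional_extensionality ->. Qed.

HB.instance Definition _ :=
  hasChoice.Build R R_find_correct R_find_complete R_find_ext.

Lemma R_addA : ssrfun.associative Rplus. Proof. by move=> x y z; rewrite Rplus_assoc. Qed.
Lemma R_addC : ssrfun.commutative Rplus. Proof. exact: Rplus_comm. Qed.
Lemma R_add0 : ssrfun.left_id R0 Rplus. Proof. exact: Rplus_0_l. Qed.
Lemma R_addN : ssrfun.left_inverse R0 Ropp Rplus. Proof. exact: Rplus_opp_l. Qed.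

HB.instance Definition _ := GRing.isZmodule.Build R R_addA R_addC R_add0 R_addN.

Lemma R_mulA : ssrfun.associative Rmult. Proof. by move=> x y z; rewrite Rmult_assoc. Qed.
Lemma R_mulC : ssrfun.commutative Rmult. Proof. exact: Rmult_comm. Qed.
Lemma R_mul1 : ssrfun.left_id R1 Rmult. Proof. exact: Rmult_1_l. Qed.
Lemma R_mulDl : ssrfun.left_distributive Rmult Rplus. Proof. exact: Rmult_plus_distr_r. Qed.
Lemma R_one_neq0 : R1 != R0.
Proof. by apply/eqP; exact: R1_neq_R0. Qed.

HB.instance Definition _ :=
  GRing.Zmodule_isComNzRing.Build R R_mulA R_mulC R_mul1 R_mulDl R_one_neq0.

Definition R_inv (x : R) : R := if Req_EM_T x R0 then R0 else Rinv x.

Lemma R_mulVf (x : R) : x != R0 -> (R_inv x * x)%R = R1.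
Proof.
move=> hx; rewrite /R_inv; case: Req_EM_T => [h|h].
  by rewrite h eqxx in hx.
exact: Rinv_l.
Qed.

Lemma R_inv0 : R_inv R0 = R0.
Proof. by rewrite /R_inv; case: Req_EM_T. Qed.

HB.instance Definition _ := GRing.ComNzRing_isField.Build R R_mulVf R_inv0.

Local Open Scope ring_scope.

Definition symmetric_mx (n : nat) (Q : 'M[R]_n) : Prop := Q^T = Q.

Definition posdef_mx (n : nat) (Q : 'M[R]_n) : Prop :=
  symmetric_mx Q /\
  forall x : 'cV[R]_n, x != 0 -> Rlt R0 ((x^T *m Q *m x) 0 0).

(* Mixed discriminant
     D(Q_1,...,Q_n) = d^n/(dt_1...dt_n) det(t_1 Q_1 + ... + t_n Q_n).
   Since det(sum_i t_i Q_i) is multilinear in the columns, it equals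
   sum_{g : 'I_n -> 'I_n} (prod_j t_{g j}) det(matrix whose j-th column is
   the j-th column of Q_{g j}); the coefficient of t_1...t_n (which is the
   mixed derivative, the polynomial being of degree n) is the sum over the
   bijections g, i.e. over permutations. *)
Definition mixed_discr (n : nat) (Q : 'I_n -> 'M[R]_n) : R :=
  \sum_(s : 'S_n) \det (\matrix_(i < n, j < n) Q (s j) i j).

Definition f_lndet (n : nat) (Q : 'I_n -> 'M[R]_n) (x : 'I_n -> R) : R :=
  ln (\det (\sum_(i < n) exp (x i) *: Q i)).

Definition in_H (n : nat) (x : 'I_n -> R) : Prop := \sum_(i < n) x i = 0.

(* Write Q_i = L_i L_i^T by Cholesky.  Expanding the determinants of the mixed
   discriminant entrywise shows that for Gram matrices it is a sum of squares,
   D(L_i L_i^T) = sum_k det(U_k)^2, where the m-th column of U_k is column k(m)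
   of L_m.  Hence D(M Q_i M^T) = det(M)^2 D(Q), and D is homogeneous of degree
   one in each Q_i.  As prod tau_i = exp(sum xi_i) = 1 and
   det(T)^2 = 1 / det(sum tau_i Q_i), it remains to see det(sum tau_i Q_i) <= 1:
   by minimality it is at most the value det(sum Q_i) at 0 in H, and by
   Hadamard's inequality and x <= e^(x-1) the latter is at most
   exp(tr(sum Q_i) - n) = 1. *)

From Stdlib Require Import Reals Lra.
From mathcomp Require Import all_boot all_algebra all_fingroup.
From mathcomp Require Import ring.
Import GRing.Theory.
Local Open Scope ring_scope.

Lemma Rsum_ge0 (I : finType) (P : pred I) (f : I -> R) :
  (forall i, P i -> Rle R0 (f i)) -> Rle R0 (\sum_(i | P i) f i).
Proof.
move=> f_ge0; apply: (big_ind (Rle R0)) => [|x y|]; last exact: f_ge0.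
- exact: Rle_refl.
- by move=> x_ge0 y_ge0; apply: Rplus_le_le_0_compat.
Qed.

Lemma Rprod_le (I : finType) (f g : I -> R) :
  (forall i, Rle R0 (f i)) -> (forall i, Rle (f i) (g i)) ->
  Rle (\prod_i f i) (\prod_i g i).
Proof.
move=> f_ge0 le_fg.
suff [] : Rle R0 (\prod_i f i) /\ Rle (\prod_i f i) (\prod_i g i) by [].
apply: (big_ind2 (fun x y => Rle R0 x /\ Rle x y)) => [|x1 x2 y1 y2 [? ?] [? ?]|i _].
- by split; [apply: Rle_0_1 | apply: Rle_refl].
- by split; [apply: Rmult_le_pos | apply: Rmult_le_compat].
- by split; [apply: f_ge0 | apply: le_fg].
Qed.

Lemma mulmx_col_block n (a : 'M[R]_1) (w : 'rV_n) (v : 'cV_n) (P : 'M_n)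
    (y : 'M_1) (z : 'cV_n) :
  (col_mx y z)^T *m block_mx a w v P *m col_mx y z =
  y^T *m a *m y + z^T *m v *m y + (y^T *m w *m z + z^T *m P *m z).
Proof. by rewrite tr_col_mx mul_row_block mul_row_col !mulmxDl. Qed.

Lemma posdef_schur n (a : 'M[R]_1) (v : 'cV[R]_n) (P : 'M[R]_n) :
  posdef_mx (block_mx a v^T v P) ->
  Rlt R0 (a 0 0) /\ posdef_mx (P - (a 0 0)^-1 *: (v *m v^T)).
Proof.
move=> [/= /eqP]; rewrite tr_block_mx trmxK => /eqP/eq_block_mx [_ _ _ symP] pos.
set al := a 0 0; have a_scalar : a = al%:M by rewrite {1}(mx11_scalar a).
have al_gt0 : Rlt R0 al.
  have := pos (col_mx 1 0); rewrite col_mx_eq0 oner_eq0 => /(_ isT).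
  by rewrite mulmx_col_block trmx0 !mul0mx !mulmx0 !addr0 trmx1 mul1mx mulmx1.
have al_neq0 : al != 0.
  by apply/eqP => al0; move: al_gt0; rewrite al0; apply: Rlt_irrefl.
split=> //; split.
  by rewrite /symmetric_mx linearB /= linearZ /= trmx_mul trmxK symP.
move=> z z_neq0; set b := (v^T *m z) 0 0.
have vz : v^T *m z = b%:M by rewrite {1}(mx11_scalar (v^T *m z)).
have zv : z^T *m v = b%:M by rewrite -(trmxK (z^T *m v)) trmx_mul trmxK vz tr_scalar_mx.
(* At (-b/al, z) the quadratic form of the block matrix is that of the
   Schur complement at z. *)
have := pos (col_mx (- (al^-1 * b))%:M z); rewrite col_mx_eq0 (negbTE z_neq0) andbF.
move=> /(_ isT); rewrite mulmx_col_block a_scalar tr_scalar_mx -[_ *m v^T *m z]mulmxA vz zv.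
rewrite -!scalar_mxM mulmxBr mulmxBl -scalemxAr -scalemxAl !mulmxA.
rewrite -[z^T *m v *m v^T *m z]mulmxA vz zv -scalar_mxM scale_scalar_mx.
have quad : - (al^-1 * b) * al * - (al^-1 * b) + b * - (al^-1 * b) + - (al^-1 * b) * b =
             - (al^-1 * (b * b)) by field.
by rewrite addrA -!raddfD /= quad addrC raddfN.
Qed.

Lemma posdef_cholesky {n} {P : 'M[R]_n} :
  posdef_mx P -> exists L : 'M[R]_n, is_trig_mx L /\ P = L *m L^T.
Proof.
elim: n P => [|n IHn] P posP.
  by exists 0; split; [apply/forallP => -[] | apply/matrixP => -[]].
change 'M[R]_(1 + n) in P; rewrite -[P]submxK in posP *.
set a := ulsubmx P; set w := ursubmx P; set v := dlsubmx P; set P' := drsubmx P.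
have {}posP : posdef_mx (block_mx a w v P') := posP.
have w_tr : w = v^T.
  by case: posP; rewrite /symmetric_mx tr_block_mx => /eq_block_mx [_ <- _ _].
rewrite w_tr in posP *; move: posP => /posdef_schur [al_gt0 /IHn [L' [trigL' defL']]].
set al := a 0 0 in al_gt0 defL'; pose c := sqrt al.
have c_neq0 : c != 0.
  by apply/eqP => c0; move: (sqrt_lt_R0 _ al_gt0); rewrite -/c c0; apply: Rlt_irrefl.
have cc : c * c = al := sqrt_sqrt _ (Rlt_le _ _ al_gt0).
pose L : 'M_(1 + n) := block_mx c%:M 0 (c^-1 *: v) L'.
exists L; split.
  by change (is_trig_mx L); rewrite is_trig_block_mx // eqxx scalar_mx_is_trig trigL'.
change (block_mx a v^T v P' = L *m L^T).
rewrite tr_block_mx mulmx_block !trmx0 !mulmx0 !mul0mx !addr0 tr_scalar_mx linearZ /=.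
congr block_mx.
- by rewrite -scalar_mxM cc {1}(mx11_scalar a).
- by rewrite mul_scalar_mx scalerA mulfV // scale1r.
- by rewrite mul_mx_scalar scalerA mulrC mulVf // scale1r.
- by rewrite -defL' -scalemxAl -scalemxAr scalerA -invfM cc addrC subrK.
Qed.

Lemma exp_sum (I : finType) (f : I -> R) : exp (\sum_i f i) = \prod_i exp (f i).
Proof. exact: (big_morph exp exp_plus exp_0). Qed.

Lemma posdef_det_neq0 {n} {P : 'M[R]_n} : posdef_mx P -> \det P != 0.
Proof.
move=> [_ posP]; apply/negP => /det0P [x x_neq0 xP].
have := posP x^T; rewrite trmx_eq0 trmxK xP mul0mx mxE => /(_ x_neq0).
exact: Rlt_irrefl.
Qed.

Lemma posdef_det_pos {n} {P : 'M[R]_n} : posdef_mx P -> Rlt R0 (\det P).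
Proof.
move=> posP; have [L [_ defP]] := posdef_cholesky posP.
have := posdef_det_neq0 posP; rewrite defP det_mulmx det_tr => detL2_neq0.
by apply: Rlt_0_sqr => detL0; rewrite detL0 mul0r eqxx in detL2_neq0.
Qed.

Lemma sqr_diag_le_gram n (L : 'M[R]_n) i : Rle (L i i * L i i) ((L *m L^T) i i).
Proof.
rewrite mxE (bigD1 i) //= mxE; set r := \sum_(j | _) _.
have : Rle R0 r by apply: Rsum_ge0 => j _; rewrite mxE; apply: Rle_0_sqr.
change (Rle R0 r -> Rle (L i i * L i i) (Rplus (L i i * L i i) r)); lra.
Qed.

Lemma posdef_diag_ge0 n (P : 'M[R]_n) i : posdef_mx P -> Rle R0 (P i i).
Proof.
move=> /posdef_cholesky [L [_ ->]].
by apply: (Rle_trans _ (L i i * L i i)); [apply: Rle_0_sqr | apply: sqr_diag_le_gram].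
Qed.

Lemma posdef_det_le_prod_diag {n} {P : 'M[R]_n} :
  posdef_mx P -> Rle (\det P) (\prod_i P i i).
Proof.
move=> /posdef_cholesky [L [trigL ->]].
rewrite det_mulmx det_tr (det_trig trigL) -big_split /=.
by apply: Rprod_le => i; [apply: Rle_0_sqr | apply: sqr_diag_le_gram].
Qed.

Lemma posdef_det_le_exp_tr {n} {P : 'M[R]_n} :
  posdef_mx P -> Rle (\det P) (exp (\tr P - n%:R)).
Proof.
move=> posP; apply: Rle_trans (posdef_det_le_prod_diag posP) _.
have -> : Rminus (\tr P) n%:R = \sum_i (P i i - 1).
  by rewrite sumrB sumr_const card_ord.
rewrite exp_sum.
apply: Rprod_le => i; first exact: posdef_diag_ge0.
have := exp_ineq1_le (P i i - 1).
change (Rle (Rplus R1 (Rplus (P i i) (Ropp R1))) (exp (Rplus (P i i) (Ropp R1))) ->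
        Rle (P i i) (exp (Rplus (P i i) (Ropp R1)))); lra.
Qed.

Lemma posdef_sum_scale {n} {c : 'I_n -> R} {Q : 'I_n -> 'M[R]_n} :
  (forall i, Rlt R0 (c i)) -> (forall i, posdef_mx (Q i)) ->
  posdef_mx (\sum_i c i *: Q i).
Proof.
move=> c_gt0 posQ; split=> [|x x_neq0].
  rewrite /symmetric_mx raddf_sum; apply: eq_bigr => i _.
  by change ((c i *: Q i)^T = c i *: Q i); rewrite linearZ /= (proj1 (posQ i)).
case: n => [|n] in c Q c_gt0 posQ x x_neq0 *.
  by rewrite (flatmx0 x) eqxx in x_neq0.
have term_gt0 i : Rlt R0 ((x^T *m (c i *: Q i) *m x) 0 0).
  rewrite -scalemxAr -scalemxAl mxE.
  by apply: Rmult_lt_0_compat; [|apply: (proj2 (posQ i))].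
rewrite mulmx_sumr mulmx_suml summxE (bigD1 ord0) //=.
by apply: Rplus_lt_le_0_compat => //; apply: Rsum_ge0 => i _; apply: Rlt_le.
Qed.

Section MixedDiscriminant.

Context {K : comNzRingType}.

Definition mxdiscr {n} (A : 'I_n -> 'M[K]_n) : K :=
  \sum_(s : 'S_n) \det (\matrix_(i, j) A (s j) i j).

Definition colsel_mx {n} (L : 'I_n -> 'M[K]_n) (k : {ffun 'I_n -> 'I_n}) : 'M[K]_n :=
  \matrix_(i, m) L m i (k m).

Lemma eq_mxdiscr {n} {A B : 'I_n -> 'M[K]_n} : A =1 B -> mxdiscr A = mxdiscr B.
Proof.
by move=> eqAB; apply: eq_bigr => s _; congr (\det _); apply/matrixP => i j; rewrite !mxE eqAB.
Qed.

Lemma mxdiscr_scale n (c : 'I_n -> K) (A : 'I_n -> 'M[K]_n) :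
  mxdiscr (fun m => c m *: A m) = \prod_m c m * mxdiscr A.
Proof.
rewrite /mxdiscr mulr_sumr; apply: eq_bigr => s _.
have -> : \matrix_(i, j) (c (s j) *: A (s j)) i j =
          \matrix_(i, j) A (s j) i j *m diag_mx (\row_j c (s j)).
  by apply/matrixP => i j; rewrite mul_mx_diag !mxE mulrC.
rewrite det_mulmx det_diag mulrC [\prod_m c m](reindex_inj (@perm_inj _ s)) /=.
by congr (_ * _); apply: eq_bigr => j _; rewrite mxE.
Qed.

Lemma det_col_perm n (s : 'S_n) (M : 'M[K]_n) :
  \det (col_perm s M) = (-1) ^+ s * \det M.
Proof. by rewrite col_permE det_mulmx det_perm odd_permV mulrC. Qed.

Lemma mxdiscr_gram n (L : 'I_n -> 'M[K]_n) :
  mxdiscr (fun m => L m *m (L m)^T) = \sum_k \det (colsel_mx L k) ^+ 2.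
Proof.
pose A k (p : 'S_n) := \prod_i colsel_mx L k i (p i).
have signed_sum k (s : 'S_n) :
    \sum_(t : 'S_n) (-1) ^+ t * A k (t * s)%g = (-1) ^+ s * \det (colsel_mx L k).
  rewrite -det_col_perm; apply: eq_bigr => t _; congr (_ * _).
  by apply: eq_bigr => i _; rewrite !mxE permM.
have expand (s : 'S_n) : \det (\matrix_(i, j) (L (s j) *m (L (s j))^T) i j) =
    \sum_k (\sum_(t : 'S_n) (-1) ^+ t * A k (t * s)%g) * A k s.
  rewrite (eq_bigr (fun k => \sum_(t : 'S_n) (-1) ^+ t * (A k (t * s)%g * A k s))); last first.
    by move=> k _; rewrite mulr_suml; apply: eq_bigr => t _; rewrite mulrA.
  rewrite exchange_big; apply: eq_bigr => t _; rewrite -mulr_sumr; congr (_ * _).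
  rewrite (eq_bigr (fun i => \sum_k L (s (t i)) i k * L (s (t i)) (t i) k)); last first.
    by move=> i _; rewrite !mxE; apply: eq_bigr => k _; rewrite !mxE.
  rewrite bigA_distr_bigA /=.
  have precomp_inj : injective (fun k : {ffun 'I_n -> 'I_n} => [ffun i => k ((t * s)%g i)]).
    move=> k1 k2 /ffunP eqk; apply/ffunP => m.
    by have := eqk ((t * s)^-1 m)%g; rewrite !ffunE permKV.
  rewrite (reindex_inj precomp_inj) /=; apply: eq_bigr => k _.
  rewrite big_split /= /A [X in _ = _ * X](reindex_inj (@perm_inj _ t)) /=.
  by congr (_ * _); apply: eq_bigr => i _; rewrite ffunE !mxE permM.
rewrite /mxdiscr (eq_bigr _ (fun s _ => expand s)) exchange_big; apply: eq_bigr => k _.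
rewrite expr2 {2}/determinant mulr_sumr; apply: eq_bigr => s _.
by rewrite signed_sum -mulrA mulrCA.
Qed.

Lemma colsel_mx_mull n (M : 'M[K]_n) (L : 'I_n -> 'M[K]_n) k :
  colsel_mx (fun m => M *m L m) k = M *m colsel_mx L k.
Proof. by apply/matrixP => i m; rewrite !mxE; apply: eq_bigr => j _; rewrite !mxE. Qed.

Lemma mxdiscr_gram_congr n (M : 'M[K]_n) (L : 'I_n -> 'M[K]_n) :
  mxdiscr (fun m => M *m L m *m (M *m L m)^T) =
  \det M ^+ 2 * mxdiscr (fun m => L m *m (L m)^T).
Proof.
rewrite !mxdiscr_gram mulr_sumr; apply: eq_bigr => k _.
by rewrite colsel_mx_mull det_mulmx exprMn.
Qed.

End MixedDiscriminant.

Lemma invR_ge1 (a : R) : Rlt R0 a -> Rle a 1 -> Rle 1 a^-1.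
Proof.
move=> a_gt0 a_le1; have -> : a^-1 = Rinv a.
  rewrite /GRing.inv /= /R_inv; case: Req_EM_T => // a0.
  by case: (Rlt_not_eq _ _ a_gt0 (esym a0)).
by rewrite -Rinv_1; apply: Rinv_le_contravar.
Qed.

Lemma lndet_min_det_le1 n (Q : 'I_n -> 'M[R]_n) (xi : 'I_n -> R) :
  (forall i, posdef_mx (Q i)) -> \sum_i \tr (Q i) = n%:R ->
  (forall x, in_H x -> Rle (f_lndet Q xi) (f_lndet Q x)) ->
  Rle (\det (\sum_i exp (xi i) *: Q i)) 1.
Proof.
move=> posQ trQ xi_min.
have posQsum : posdef_mx (\sum_i Q i).
  by have := posdef_sum_scale (fun=> Rlt_0_1) posQ; under eq_bigr do rewrite scale1r.
have sumQE : \sum_i Q i = \sum_i exp ((fun=> 0 : R) i) *: Q i.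
  by apply: eq_bigr => i _; rewrite exp_0 scale1r.
have ln_le : Rle (f_lndet Q xi) (ln (\det (\sum_i Q i))).
  by rewrite sumQE; apply: xi_min; rewrite /in_H big1.
apply: (Rle_trans _ (\det (\sum_i Q i))).
  apply: Rnot_lt_le => lt.
  exact: Rlt_not_le _ _ (ln_increasing _ _ (posdef_det_pos posQsum) lt) ln_le.
apply: Rle_trans (posdef_det_le_exp_tr posQsum) _.
by rewrite raddf_sum trQ Rminus_diag exp_0; apply: Rle_refl.
Qed.

Theorem lemma2p2 (n : nat) (Q : 'I_n -> 'M[R]_n)
  (hQ : forall i, posdef_mx (Q i))
  (htr : \sum_(i < n) \tr (Q i) = n%:R)
  (xi : 'I_n -> R) (hxiH : in_H xi)
  (hmin : forall x : 'I_n -> R, in_H x -> Rle (f_lndet Q xi) (f_lndet Q x))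
  (S : 'M[R]_n) (hS : S^T *m S = \sum_(i < n) exp (xi i) *: Q i)
  (T : 'M[R]_n) (hT : T = invmx S) :
  let tau := fun i => exp (xi i) in
  let B := fun i => tau i *: (T^T *m Q i *m T) in
  Rge (mixed_discr B) (mixed_discr Q).
Proof.
move=> tau B.
have [L defQ] := fin_all_exists (fun m => posdef_cholesky (hQ m)).
have DQ : mixed_discr Q = mxdiscr (fun m => L m *m (L m)^T).
  by apply: eq_mxdiscr => m; rewrite -(proj2 (defQ m)).
have DB : mixed_discr B = \det T ^+ 2 * mixed_discr Q.
  have eqB m : B m = tau m *: (T^T *m L m *m (T^T *m L m)^T).
    by rewrite /B (proj2 (defQ m)) trmx_mul trmxK !mulmxA.
  rewrite -[mixed_discr B]/(mxdiscr B) (eq_mxdiscr eqB) mxdiscr_scale mxdiscr_gram_congr det_tr -DQ.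
  by rewrite /tau -exp_sum hxiH exp_0 mul1r.
have detA_pos := posdef_det_pos (posdef_sum_scale (fun i => exp_pos (xi i)) hQ).
have detT2 : \det T ^+ 2 = (\det (\sum_i exp (xi i) *: Q i))^-1.
  by rewrite hT det_inv -hS det_mulmx det_tr -expr2 exprVn.
have DQ_ge0 : Rle R0 (mixed_discr Q).
  by rewrite DQ mxdiscr_gram; apply: Rsum_ge0 => k _; rewrite expr2; apply: Rle_0_sqr.
rewrite DB detT2; apply: Rle_ge; rewrite -{1}(Rmult_1_l (mixed_discr Q)).
by apply: Rmult_le_compat_r => //; apply: invR_ge1 => //; apply: lndet_min_det_le1.
Qed.
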